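(* Let $\alpha$ be a positive quadratic irrational. Then there is a non-identity matrix $A_0\in GL(2,\mathbb Z)$ such that $\pi(A_0)$ restricts to an isometric automorphism of $\mathcal A_\alpha$ and, for every $A\in GL(2,\mathbb Z)$ such that $\pi(A)$ restricts to an isometric automorphism of $\mathcal A_\alpha$, there is $n\in\mathbb Z$ with $A=A_0^n$ (so $\pi(A)=\pi(A_0)^n$).
   Context: For $f\in C(\mathbb T^2)$ (with $\mathbb T$ the unit circle), the Fourier transform is $\hat f(m,n)=\int_{\mathbb T^2} f(e^{is},e^{it})e^{-i(ms+nt)}\,d\mu$, $\mu$ normalized Lebesgue measure. For a positive irrational $\alpha$, $\mathcal A_\alpha=\{f\in C(\mathbb T^2): \hat f(m,n)=0 \text{ whenever } m+\alpha n<0\}$, a uniform algebra with the sup norm on $\mathbb T^2$. For $A=\begin{bmatrix} a&b\\ c&d\end{bmatrix}\in GL(2,\mathbb Z)$, $\pi(A):C(\mathbb T^2)\to C(\mathbb T^2)$ is $\pi(A)(f)=f\circ\varphi$ with $\varphi(z,w)=(z^aw^b,z^cw^d)$. *)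

From Stdlib Require Import Reals Lra Lia ZArith ClassicalEpsilon.
Open Scope R_scope.

(** Complex numbers as pairs (real part, imaginary part). *)
Definition C := (R * R)%type.
Definition Cmod (z : C) : R := sqrt (fst z ^ 2 + snd z ^ 2).
Definition Csub (z w : C) : C := (fst z - fst w, snd z - snd w).

(** Functions on T^2, represented by their lifts F(s,t) = f(e^{is}, e^{it}). *)
Definition torus_fun := R -> R -> C.

Definition is_CT2 (f : torus_fun) : Prop :=
  (forall s t, f (s + 2 * PI) t = f s t) /\
  (forall s t, f s (t + 2 * PI) = f s t) /\
  (forall s t eps, 0 < eps -> exists delta, 0 < delta /\
     forall s' t', Rabs (s' - s) < delta -> Rabs (t' - t) < delta ->
       Cmod (Csub (f s' t') (f s t)) < eps).

(** Total Riemann integral: the value of the Riemann integral when the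
    function is Riemann integrable on [a,b] (only used on continuous
    functions, where it is integrable). *)
Definition Rint (g : R -> R) (a b : R) : R :=
  epsilon (inhabits 0)
    (fun I => exists pr : Riemann_integrable g a b, RiemannInt pr = I).

Definition torus_integral (g : R -> R -> R) : R :=
  / (4 * PI ^ 2) * Rint (fun s => Rint (fun t => g s t) 0 (2 * PI)) 0 (2 * PI).

(** Fourier coefficient: \hat f(m,n) = ∫ f(e^{is},e^{it}) e^{-i(ms+nt)} dμ. *)
Definition fourier (f : torus_fun) (m n : Z) : C :=
  (torus_integral (fun s t =>
     let th := IZR m * s + IZR n * t in
     fst (f s t) * cos th + snd (f s t) * sin th),
   torus_integral (fun s t =>
     let th := IZR m * s + IZR n * t in
     snd (f s t) * cos th - fst (f s t) * sin th)).

Definition in_A (alpha : R) (f : torus_fun) : Prop :=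
  is_CT2 f /\
  forall m n : Z, IZR m + alpha * IZR n < 0 -> fourier f m n = (0, 0).

Definition supnorm (f : torus_fun) : R :=
  epsilon (inhabits 0)
    (fun M => is_lub (fun x => exists s t, x = Cmod (f s t)) M).

(** 2x2 integer matrices; [[a,b],[c,d]]. *)
Record mat2 := Mat2 { ma : Z; mb : Z; mc : Z; md : Z }.

Definition det2 (A : mat2) : Z := (ma A * md A - mb A * mc A)%Z.
Definition inGL2Z (A : mat2) : Prop := det2 A = 1%Z \/ det2 A = (-1)%Z.

Definition mat2_id : mat2 := Mat2 1 0 0 1.
Definition mat2_mul (A B : mat2) : mat2 :=
  Mat2 (ma A * ma B + mb A * mc B)%Z (ma A * mb B + mb A * md B)%Z
       (mc A * ma B + md A * mc B)%Z (mc A * mb B + md A * md B)%Z.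
(** Inverse for det = ±1: A^{-1} = det(A) * adj(A). *)
Definition mat2_inv (A : mat2) : mat2 :=
  let d := det2 A in
  Mat2 (d * md A)%Z (- d * mb A)%Z (- d * mc A)%Z (d * ma A)%Z.

Fixpoint mat2_pow (A : mat2) (k : nat) : mat2 :=
  match k with O => mat2_id | S k' => mat2_mul A (mat2_pow A k') end.

Definition mat2_powZ (A : mat2) (n : Z) : mat2 :=
  if (0 <=? n)%Z then mat2_pow A (Z.to_nat n)
  else mat2_pow (mat2_inv A) (Z.to_nat (- n)).

(** π(A)(f) = f ∘ φ, φ(z,w) = (z^a w^b, z^c w^d); on lifts:
    (s,t) ↦ (a s + b t, c s + d t). *)
Definition piA (A : mat2) (f : torus_fun) : torus_fun :=
  fun s t => f (IZR (ma A) * s + IZR (mb A) * t) (IZR (mc A) * s + IZR (md A) * t).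

Definition restricts_to_isometric_aut (alpha : R) (A : mat2) : Prop :=
  (forall f, in_A alpha f -> in_A alpha (piA A f)) /\
  (forall g, in_A alpha g -> exists f, in_A alpha f /\ piA A f = g) /\
  (forall f, in_A alpha f -> supnorm (piA A f) = supnorm f).

Definition irrational (x : R) : Prop :=
  forall p q : Z, q <> 0%Z -> x <> IZR p / IZR q.
Definition quadratic_irrational (x : R) : Prop :=
  irrational x /\
  exists a b c : Z, a <> 0%Z /\ IZR a * x ^ 2 + IZR b * x + IZR c = 0.

From Pilot Require Import Defs.
From Stdlib Require Import Reals ZArith Lia Lra List.
From Stdlib Require Import Classical ClassicalEpsilon FunctionalExtensionality PropExtensionality.
From Coquelicot Require Import Coquelicot.
Open Scope R_scope.

(* The torus integral is invariant under the linear substitutions of GL(2,Z)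
   (they are generated by the coordinate swap and lower triangular matrices), so
   the Fourier coefficients of [pi(A) f] are those of [f] reindexed by the row
   action [(m, n) |-> (m, n) A].  Hence [pi(A)] maps [A_alpha] onto itself when
   this action preserves the half-plane [m + alpha n >= 0], i.e. when [(1, alpha)]
   is an eigenvector of [A] with positive eigenvalue [a + b alpha]; testing on the
   characters [e^{i(ms+nt)}] shows that this condition is also necessary.  For irrational [alpha] these
   matrices form a group embedded in the positive reals by the eigenvalue, whose
   image is discrete because [eigenvalue + det / eigenvalue] is the integer trace;
   so it is cyclic.  For quadratic [alpha] it is nontrivial: Dirichlet's
   approximation theorem and the pigeonhole principle produce a solution of the
   Pell equation of the minimal polynomial, i.e. a unit of [Z[a alpha]]. *)

Ltac push_IZR := rewrite ?plus_IZR, ?minus_IZR, ?mult_IZR, ?opp_IZR.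

(** * Integer matrices with eigenvector [(1, alpha)] *)

Lemma det2_mul A B : det2 (mat2_mul A B) = (det2 A * det2 B)%Z.
Proof. destruct A, B; unfold det2; simpl; ring. Qed.

Lemma inGL2Z_mul A B : inGL2Z A -> inGL2Z B -> inGL2Z (mat2_mul A B).
Proof. unfold inGL2Z; rewrite det2_mul; intros [->| ->] [->| ->]; auto. Qed.

Lemma inGL2Z_inv A : inGL2Z A -> inGL2Z (mat2_inv A).
Proof. destruct A; unfold inGL2Z, mat2_inv, det2; simpl; intros [H|H]; rewrite H; lia. Qed.

Lemma mat2_mulVm A : inGL2Z A -> mat2_mul (mat2_inv A) A = mat2_id.
Proof.
  destruct A; unfold inGL2Z, mat2_inv, mat2_mul, det2, mat2_id; simpl.
  intros [H|H]; rewrite H; f_equal; lia.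
Qed.

Lemma mat2_mulmV A : inGL2Z A -> mat2_mul A (mat2_inv A) = mat2_id.
Proof.
  destruct A; unfold inGL2Z, mat2_inv, mat2_mul, det2, mat2_id; simpl.
  intros [H|H]; rewrite H; f_equal; lia.
Qed.

Lemma mat2_mulA A B C : mat2_mul A (mat2_mul B C) = mat2_mul (mat2_mul A B) C.
Proof. destruct A, B, C; unfold mat2_mul; simpl; f_equal; ring. Qed.

Lemma mat2_mulm1 A : mat2_mul A mat2_id = A.
Proof. destruct A; unfold mat2_mul, mat2_id; simpl; f_equal; ring. Qed.

Lemma irrational_lin_indep al u v : irrational al ->
  IZR u + IZR v * al = 0 -> u = 0%Z /\ v = 0%Z.
Proof.
  intros Hirr H. destruct (Z.eq_dec v 0) as [->|Hv].
  - split; [apply eq_IZR; lra | reflexivity].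
  - exfalso. apply (Hirr (- u)%Z v Hv). apply not_0_IZR in Hv.
    rewrite opp_IZR. apply (Rmult_eq_reg_l (IZR v)); [|exact Hv].
    field_simplify; [lra | exact Hv].
Qed.

(* [A (1, al)^T = eigval al A * (1, al)^T]: the first row of this equation
   defines [eigval], the second one is [eigvec]. *)
Definition eigval (al : R) (A : mat2) : R := IZR (ma A) + IZR (mb A) * al.
Definition eigvec (al : R) (A : mat2) : Prop :=
  IZR (mc A) + IZR (md A) * al = eigval al A * al.
Definition pos_eig (al : R) (A : mat2) : Prop :=
  inGL2Z A /\ eigvec al A /\ 0 < eigval al A.

Section Eigen.
Variable al : R.

Lemma eigval_mul A B : eigvec al B -> eigval al (mat2_mul A B) = eigval al A * eigval al B.
Proof.
  unfold eigvec, eigval; destruct A as [a1 b1 c1 d1], B as [a2 b2 c2 d2]; simpl; push_IZR; intros H.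
  transitivity (IZR a1 * (IZR a2 + IZR b2 * al) + IZR b1 * (IZR c2 + IZR d2 * al));
    [ring | rewrite H; ring].
Qed.

Lemma eigvec_row2_mul A B : eigvec al B ->
  IZR (mc (mat2_mul A B)) + IZR (md (mat2_mul A B)) * al
  = (IZR (mc A) + IZR (md A) * al) * eigval al B.
Proof.
  unfold eigvec, eigval; destruct A as [a1 b1 c1 d1], B as [a2 b2 c2 d2]; simpl; push_IZR; intros H.
  transitivity (IZR c1 * (IZR a2 + IZR b2 * al) + IZR d1 * (IZR c2 + IZR d2 * al));
    [ring | rewrite H; ring].
Qed.

Lemma eigvec_mul A B : eigvec al A -> eigvec al B -> eigvec al (mat2_mul A B).
Proof.
  intros HA HB. unfold eigvec.
  rewrite eigvec_row2_mul, eigval_mul, HA by exact HB. ring.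
Qed.

Lemma eigval_id : eigval al mat2_id = 1.
Proof. unfold eigval; simpl; ring. Qed.

Lemma eigvec_id : eigvec al mat2_id.
Proof. unfold eigvec; rewrite eigval_id; simpl; ring. Qed.

Lemma eigval_char A : eigvec al A ->
  eigval al A * eigval al A = IZR (ma A + md A) * eigval al A - IZR (det2 A).
Proof.
  unfold eigvec, eigval, det2; destruct A as [a b c d]; simpl; push_IZR; intro H.
  transitivity (IZR a * (IZR a + IZR b * al) + IZR b * ((IZR a + IZR b * al) * al));
    [ring | rewrite <- H; ring].
Qed.

Lemma eigval_neq0 A : inGL2Z A -> eigvec al A -> eigval al A <> 0.
Proof.
  intros G E H0. pose proof (eigval_char A E) as T. rewrite H0 in T.
  destruct G as [D|D]; rewrite D in T; simpl in T; lra.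
Qed.

Lemma eigval_inv A : inGL2Z A -> eigvec al A -> eigval al (mat2_inv A) = / eigval al A.
Proof.
  intros HG HE. pose proof (eigval_neq0 A HG HE).
  apply (Rmult_eq_reg_r (eigval al A)); [|assumption].
  rewrite <- eigval_mul, mat2_mulVm, eigval_id, Rinv_l by assumption. reflexivity.
Qed.

Lemma eigvec_inv A : inGL2Z A -> eigvec al A -> eigvec al (mat2_inv A).
Proof.
  intros HG HE. pose proof (eigval_neq0 A HG HE).
  pose proof (eigvec_row2_mul (mat2_inv A) A HE) as H2.
  rewrite mat2_mulVm in H2 by exact HG. cbn [mc md mat2_id] in H2.
  unfold eigvec. apply (Rmult_eq_reg_r (eigval al A)); [|assumption].
  rewrite <- H2, eigval_inv by assumption. simpl. field. assumption.
Qed.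

Lemma pos_eig_mul A B : pos_eig al A -> pos_eig al B -> pos_eig al (mat2_mul A B).
Proof.
  intros (GA & EA & PA) (GB & EB & PB).
  repeat split; auto using inGL2Z_mul, eigvec_mul.
  rewrite eigval_mul by exact EB. nra.
Qed.

Lemma pos_eig_inv A : pos_eig al A -> pos_eig al (mat2_inv A).
Proof.
  intros (G & E & P). repeat split; auto using inGL2Z_inv, eigvec_inv.
  rewrite eigval_inv by assumption. apply Rinv_0_lt_compat, P.
Qed.

Lemma eigval_inj A B : irrational al -> eigvec al A -> eigvec al B ->
  eigval al A = eigval al B -> A = B.
Proof.
  intros Hirr EA EB L.
  assert (H1 : (ma A - ma B = 0 /\ mb A - mb B = 0)%Z).
  { apply (irrational_lin_indep al); auto. unfold eigval in L. push_IZR. lra. }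
  assert (H2 : (mc A - mc B = 0 /\ md A - md B = 0)%Z).
  { apply (irrational_lin_indep al); auto. unfold eigvec in *. rewrite L in EA. push_IZR. lra. }
  destruct A, B; simpl in *; f_equal; lia.
Qed.

(* [eigval + det2 A / eigval] is the integer trace, which keeps [eigval] away from 1. *)
Lemma eigval_gap A : pos_eig al A -> ~ (1 < eigval al A < 3/2).
Proof.
  intros (G & E & P) [L1 L2]. pose proof (eigval_char A E) as T.
  set (l := eigval al A) in *. set (t := (ma A + md A)%Z) in *.
  destruct G as [D|D]; rewrite D in T; simpl in T.
  - destruct (Z_le_gt_dec t 2) as [Ht|Ht].
    + apply IZR_le in Ht. nra.
    + assert (Ht' : (3 <= t)%Z) by lia. apply IZR_le in Ht'. nra.
  - destruct (Z_le_gt_dec t 0) as [Ht|Ht].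
    + apply IZR_le in Ht. nra.
    + assert (Ht' : (1 <= t)%Z) by lia. apply IZR_le in Ht'. nra.
Qed.

Lemma eigvec_eigval_pow A k : eigvec al A ->
  eigvec al (mat2_pow A k) /\ eigval al (mat2_pow A k) = eigval al A ^ k.
Proof.
  intro H; induction k as [|k [IHv IHl]]; simpl.
  - split; [apply eigvec_id | apply eigval_id].
  - split; [apply eigvec_mul; auto|]. rewrite eigval_mul, IHl by exact IHv. reflexivity.
Qed.

Lemma eigvec_eigval_powZ A n : inGL2Z A -> eigvec al A ->
  eigvec al (mat2_powZ A n) /\ eigval al (mat2_powZ A n) = powerRZ (eigval al A) n.
Proof.
  intros G E. unfold mat2_powZ. destruct n as [|p|p]; simpl.
  - split; [apply eigvec_id | apply eigval_id].
  - apply eigvec_eigval_pow, E.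
  - destruct (eigvec_eigval_pow (mat2_inv A) (Pos.to_nat p) (eigvec_inv A G E)) as [Hv Hl].
    split; [exact Hv|]. rewrite Hl, <- pow_inv.
    rewrite eigval_inv by assumption. reflexivity.
Qed.

End Eigen.

Lemma pow_unbounded (x y : R) : 1 < x -> exists n : nat, y < x ^ n.
Proof.
  intros Hx. destruct (Pow_x_infinity x ltac:(rewrite Rabs_right; lra) (y + 1)) as [N HN].
  exists N. specialize (HN N (le_n N)). rewrite Rabs_right in HN; [lra|].
  apply Rle_ge, pow_le. lra.
Qed.

Section DiscreteSubgroup.
Variable P : R -> Prop.
Hypothesis P_pos : forall x, P x -> 0 < x.
Hypothesis P_mul : forall x y, P x -> P y -> P (x * y).
Hypothesis P_inv : forall x, P x -> P (/ x).
Variable c : R.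
Hypothesis c_gt1 : 1 < c.
Hypothesis P_gap : forall x, P x -> ~ (1 < x < c).

Lemma discrete_ratio_gap x y : P x -> P y -> y < x -> c * y <= x.
Proof.
  intros Px Py Hyx. pose proof (P_pos y Py). apply Rnot_lt_le. intro Hlt.
  apply (P_gap (x * / y)); [auto|]. split.
  - apply (Rmult_lt_reg_r y); [lra|]. rewrite Rmult_assoc, Rinv_l; lra.
  - apply (Rmult_lt_reg_r y); [lra|]. rewrite Rmult_assoc, Rinv_l; lra.
Qed.

Lemma discrete_min_gt1 : (exists x, P x /\ 1 < x) ->
  exists g, P g /\ 1 < g /\ forall x, P x -> 1 < x -> g <= x.
Proof.
  intros Hne.
  set (E := fun y => exists x, P x /\ 1 < x /\ y = - x).
  assert (Hb : bound E) by (exists (-1); intros y (x & _ & H1 & ->); lra).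
  assert (Hn : exists y, E y) by (destruct Hne as (x & Hx & H1); exists (- x), x; auto).
  destruct (completeness E Hb Hn) as [m [Hub Hlub]].
  assert (Hlow : forall x, P x -> 1 < x -> - m <= x).
  { intros x Px H1. enough (- x <= m) by lra. apply Hub. exists x; auto. }
  assert (Happ : forall eps, 0 < eps -> exists x, P x /\ 1 < x /\ x < - m + eps).
  { intros eps He. apply NNPP. intro Hc. enough (m <= m - eps) by lra.
    apply Hlub. intros y (x & Px & H1 & ->). apply Rnot_lt_le. intro Hl.
    apply Hc. exists x. repeat split; auto; lra. }
  assert (Hm : m <= -1) by (apply Hlub; intros y (x & _ & H1 & ->); lra).
  destruct (classic (exists g, P g /\ 1 < g /\ g = - m)) as [(g & Pg & Hg & ->)|Hno].
  - exists (- m). auto.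
  - exfalso.
    assert (Hstrict : forall x, P x -> 1 < x -> - m < x).
    { intros x Px H1. destruct (Rle_lt_or_eq_dec _ _ (Hlow x Px H1)) as [h|h]; auto.
      exfalso. apply Hno. exists x; auto. }
    (* two elements in (-m, c (-m)) have a ratio in (1, c) *)
    destruct (Happ ((c - 1) * - m)) as (x & Px & Hx1 & Hx2); [nra|].
    destruct (Happ (x + m)) as (y & Py & Hy1 & Hy2); [pose proof (Hstrict x Px Hx1); lra|].
    pose proof (discrete_ratio_gap x y Px Py ltac:(lra)).
    pose proof (Hstrict y Py Hy1). nra.
Qed.

Section Generator.
Variable g : R.
Hypothesis Pg : P g.
Hypothesis g_gt1 : 1 < g.
Hypothesis g_min : forall x, P x -> 1 < x -> g <= x.

Lemma discrete_powers_ge1 N x : P x -> 1 <= x < g ^ N -> exists k, x = g ^ k.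
Proof.
  revert x; induction N as [|N IH]; intros x Px [H1 H2]; simpl in H2; [lra|].
  destruct (Rlt_or_le x g) as [h|h].
  - exists 0%nat. destruct (Rle_lt_or_eq_dec _ _ H1) as [h'|h']; [|simpl; auto].
    specialize (g_min x Px h'). lra.
  - destruct (IH (x * / g)) as [k Hk]; auto.
    + split; apply (Rmult_le_reg_r g) || apply (Rmult_lt_reg_r g); try lra;
        rewrite Rmult_assoc, Rinv_l; lra.
    + exists (S k). simpl. rewrite <- Hk. field. lra.
Qed.

Lemma discrete_powers x : P x -> exists n : Z, x = powerRZ g n.
Proof.
  intros Px.
  assert (Hge1 : forall y, P y -> 1 <= y -> exists k : nat, y = g ^ k).
  { intros y Py Hy. destruct (pow_unbounded g y g_gt1) as [N HN].
    exact (discrete_powers_ge1 N y Py (conj Hy HN)). }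
  destruct (Rle_or_lt 1 x) as [h|h].
  - destruct (Hge1 x Px h) as [k ->]. exists (Z.of_nat k). apply pow_powerRZ.
  - pose proof (P_pos x Px).
    destruct (Hge1 (/ x) (P_inv x Px)) as [k Hk].
    { rewrite <- Rinv_1. left. apply Rinv_lt_contravar; lra. }
    exists (- Z.of_nat k)%Z. rewrite powerRZ_neg', <- pow_powerRZ, <- Hk.
    field. lra.
Qed.

End Generator.
End DiscreteSubgroup.

Lemma pos_eig_cyclic al : irrational al -> (exists A, pos_eig al A /\ 1 < eigval al A) ->
  exists A0, pos_eig al A0 /\ 1 < eigval al A0 /\
    forall A, pos_eig al A -> exists n, A = mat2_powZ A0 n.
Proof.
  intros Hirr Hne.
  set (P := fun x => exists A, pos_eig al A /\ eigval al A = x).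
  assert (P_pos : forall x, P x -> 0 < x) by (intros x (A & (_ & _ & H) & <-); exact H).
  assert (P_mul : forall x y, P x -> P y -> P (x * y)).
  { intros x y (A & HA & <-) (B & HB & <-). exists (mat2_mul A B).
    split; [apply pos_eig_mul; auto | apply eigval_mul, HB]. }
  assert (P_inv : forall x, P x -> P (/ x)).
  { intros x (A & HA & <-). exists (mat2_inv A). split; [apply pos_eig_inv; auto|].
    destruct HA as (G & E & _). apply eigval_inv; assumption. }
  assert (P_gap : forall x, P x -> ~ (1 < x < 3/2)) by (intros x (A & HA & <-); apply eigval_gap, HA).
  assert (Hne' : exists x, P x /\ 1 < x).
  { destruct Hne as (A & HA & H1). exists (eigval al A). split; [exists A|]; auto. }
  destruct (discrete_min_gt1 P P_pos P_mul P_inv (3/2) ltac:(lra) P_gap Hne')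
    as (g & Pg & H1 & Hmin).
  pose proof (discrete_powers P P_pos P_mul P_inv g Pg H1 Hmin) as Hpow.
  destruct Pg as (A0 & H0 & <-).
  exists A0. split; [exact H0 | split; [exact H1 |]]. intros A HA.
  destruct (Hpow (eigval al A) (ex_intro _ A (conj HA eq_refl))) as [n Hn].
  destruct H0 as (G0 & E0 & _). destruct (eigvec_eigval_powZ al A0 n G0 E0) as [Ev El].
  exists n. apply (eigval_inj al); auto; [apply HA|]. rewrite El. exact Hn.
Qed.

(** * Units of real quadratic orders *)

Lemma pigeonhole {T : Type} (f : nat -> T) (L : list T) (N : nat) :
  (forall i, (i <= N)%nat -> In (f i) L) -> (length L <= N)%nat ->
  exists i j, (i < j <= N)%nat /\ f i = f j.
Proof.
  intros HL Hlen. apply NNPP. intro Hc.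
  assert (ND : NoDup (map f (seq 0 (S N)))).
  { apply NoDup_map_NoDup_ForallPairs; [|apply seq_NoDup].
    intros x y Hx Hy Hf. apply in_seq in Hx, Hy.
    destruct (Nat.lt_trichotomy x y) as [h|[h|h]]; auto; exfalso; apply Hc.
    - exists x, y; split; [lia | auto].
    - exists y, x; split; [lia | auto]. }
  assert (Hi : incl (map f (seq 0 (S N))) L).
  { intros z Hz. apply in_map_iff in Hz. destruct Hz as [i [<- Hi]].
    apply in_seq in Hi. apply HL. lia. }
  pose proof (NoDup_incl_length ND Hi). rewrite length_map, length_seq in H. lia.
Qed.

Lemma dirichlet_approx (g : R) (N : nat) : (1 <= N)%nat ->
  exists u v : Z, (1 <= v <= Z.of_nat N)%Z /\ Rabs (IZR u + IZR v * g) < / INR N.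
Proof.
  intros HN.
  set (r := fun i : nat => frac_part (INR i * g)).
  assert (Hr : forall i, 0 <= r i < 1) by (intro i; pose proof (base_fp (INR i * g)); unfold r; lra).
  assert (HNr : 0 < INR N) by (apply lt_0_INR; lia).
  set (box := fun i => Int_part (INR N * r i)).
  assert (Hbox : forall i, (0 <= box i < Z.of_nat N)%Z).
  { intro i. pose proof (base_Int_part (INR N * r i)). pose proof (Hr i). unfold box. split.
    - assert (-1 < Int_part (INR N * r i))%Z by (apply lt_IZR; simpl; nra). lia.
    - apply lt_IZR. rewrite <- INR_IZR_INZ. nra. }
  destruct (pigeonhole (fun i => Z.to_nat (box i)) (seq 0 N) N) as [i [j [Hij Heq]]].
  { intros i _. apply in_seq. specialize (Hbox i). lia. }
  { rewrite length_seq. lia. }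
  exists (Int_part (INR i * g) - Int_part (INR j * g))%Z, (Z.of_nat j - Z.of_nat i)%Z.
  split; [lia|].
  apply (f_equal Z.of_nat) in Heq. rewrite !Z2Nat.id in Heq by apply Hbox.
  pose proof (base_Int_part (INR N * r i)) as Bi. pose proof (base_Int_part (INR N * r j)) as Bj.
  fold (box i) (box j) in Bi, Bj. rewrite Heq in Bi.
  replace (IZR (Int_part (INR i * g) - Int_part (INR j * g)) + IZR (Z.of_nat j - Z.of_nat i) * g)
    with (r j - r i) by (unfold r, frac_part; rewrite !minus_IZR, <- !INR_IZR_INZ; ring).
  apply (Rmult_lt_reg_l (INR N)); auto. rewrite Rinv_r by lra.
  rewrite <- (Rabs_right (INR N)) by lra. rewrite <- Rabs_mult.
  apply Rabs_def1; lra.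
Qed.

Definition approx_err (g : R) (p : Z * Z) : R := Rabs (IZR (fst p) + IZR (snd p) * g).
Definition good_approx (g : R) (p : Z * Z) : Prop :=
  (1 <= snd p)%Z /\ approx_err g p < / IZR (snd p).

Lemma good_approx_below (g d : R) : 0 < d -> exists p, good_approx g p /\ approx_err g p < d.
Proof.
  intros Hd. destruct (archimed (/ d)) as [Hup _].
  set (N := (Z.to_nat (up (/ d)) + 1)%nat).
  assert (HN : / d < INR N).
  { unfold N. rewrite plus_INR. simpl.
    destruct (Z_le_gt_dec 0 (up (/ d))) as [h|h].
    - rewrite INR_IZR_INZ, Z2Nat.id by exact h. lra.
    - assert (IZR (up (/ d)) <= -1) by (apply IZR_le; lia).
      pose proof (pos_INR (Z.to_nat (up (/ d)))). lra. }
  destruct (dirichlet_approx g N ltac:(unfold N; lia)) as (u & v & Hv & Hu).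
  exists (u, v). unfold good_approx, approx_err; simpl.
  assert (Hvpos : 0 < IZR v) by (apply IZR_lt; lia).
  assert (HvN : IZR v <= INR N) by (rewrite INR_IZR_INZ; apply IZR_le; lia).
  split; [split; [lia|]|].
  - eapply Rlt_le_trans; [exact Hu|]. apply Rinv_le_contravar; auto.
  - eapply Rlt_trans; [exact Hu|]. rewrite <- (Rinv_inv d). apply Rinv_lt_contravar; auto.
    apply Rmult_lt_0_compat; [apply Rinv_0_lt_compat|]; lra.
Qed.

Lemma approx_err_pos g p : irrational g -> good_approx g p -> 0 < approx_err g p.
Proof.
  intros Hirr [H1 _]. apply Rabs_pos_lt. intro H.
  destruct (irrational_lin_indep g _ _ Hirr H). lia.
Qed.

Definition next_approx (g d : R) : Z * Z :=
  epsilon (inhabits (0, 0)%Z) (fun p => good_approx g p /\ approx_err g p < d).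

Fixpoint approx_seq (g : R) (n : nat) : Z * Z :=
  match n with
  | O => next_approx g 1
  | S n' => next_approx g (approx_err g (approx_seq g n'))
  end.

Lemma approx_seq_spec g : irrational g -> forall n,
  good_approx g (approx_seq g n) /\ approx_err g (approx_seq g (S n)) < approx_err g (approx_seq g n).
Proof.
  intros Hirr.
  assert (Hnext : forall d, 0 < d -> good_approx g (next_approx g d) /\ approx_err g (next_approx g d) < d).
  { intros d Hd. apply (epsilon_spec (inhabits (0, 0)%Z) (fun p => good_approx g p /\ approx_err g p < d)).
    apply good_approx_below, Hd. }
  assert (G : forall n, good_approx g (approx_seq g n)).
  { induction n as [|n IH]; apply Hnext; [lra | apply approx_err_pos; auto]. }
  intro n. split; [apply G | apply Hnext, approx_err_pos; auto].
Qed.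

Lemma approx_seq_decr g : irrational g -> forall i j, (i < j)%nat ->
  approx_err g (approx_seq g j) < approx_err g (approx_seq g i).
Proof.
  intros Hirr i j Hij. induction Hij.
  - apply approx_seq_spec, Hirr.
  - eapply Rlt_trans; [apply approx_seq_spec, Hirr | exact IHHij].
Qed.

Definition qnorm (B C x y : Z) : Z := (x * x - B * x * y + C * y * y)%Z.

Lemma qnorm_factor g B C x y : g * g + IZR B * g + IZR C = 0 ->
  IZR (qnorm B C x y) = (IZR x + IZR y * g) * (IZR x - IZR B * IZR y - IZR y * g).
Proof.
  intros Hg. unfold qnorm. push_IZR.
  transitivity ((IZR x + IZR y * g) * (IZR x - IZR B * IZR y - IZR y * g)
                + IZR y * IZR y * (g * g + IZR B * g + IZR C)); [ring | rewrite Hg; ring].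
Qed.

Lemma qnorm_good_approx g B C p : irrational g -> g * g + IZR B * g + IZR C = 0 ->
  good_approx g p ->
  qnorm B C (fst p) (snd p) <> 0%Z /\
  Rabs (IZR (qnorm B C (fst p) (snd p))) < 1 + Rabs (IZR B + 2 * g).
Proof.
  intros Hirr Hg [Hv Hd]. destruct p as [u v]. unfold approx_err in Hd; simpl in *.
  rewrite (qnorm_factor g) by exact Hg.
  split.
  - intro H0. apply (f_equal IZR) in H0. rewrite (qnorm_factor g) in H0 by exact Hg.
    apply Rmult_integral in H0. destruct H0 as [H0|H0].
    + destruct (irrational_lin_indep g u v Hirr H0). lia.
    + destruct (irrational_lin_indep g (u - B * v) (- v) Hirr); [push_IZR; lra | lia].
  - assert (Hvp : 1 <= IZR v) by (apply IZR_le; auto).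
    set (e := IZR u + IZR v * g) in *.
    assert (He1 : Rabs e * IZR v < 1).
    { apply (Rmult_lt_compat_r (IZR v)) in Hd; [|lra]. rewrite Rinv_l in Hd by lra. exact Hd. }
    assert (Hf : Rabs (IZR u - IZR B * IZR v - IZR v * g) <= Rabs e + IZR v * Rabs (IZR B + 2 * g)).
    { replace (IZR u - IZR B * IZR v - IZR v * g) with (e + (- IZR v) * (IZR B + 2 * g))
        by (unfold e; ring).
      eapply Rle_trans; [apply Rabs_triang|].
      rewrite Rabs_mult, Rabs_Ropp, (Rabs_right (IZR v)) by lra. lra. }
    rewrite Rabs_mult.
    pose proof (Rabs_pos e). pose proof (Rabs_pos (IZR B + 2 * g)). nra.
Qed.

(* [qnorm] is the norm form of [Z[g]]; two elements of the same norm [k] that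
   are congruent modulo [k] have a quotient of norm 1. *)
Lemma qnorm_quotient B C u v s t : let k := qnorm B C u v in k <> 0%Z ->
  qnorm B C (u + k * s) (v + k * t) = k ->
  qnorm B C (1 + u * s - B * u * t + C * v * t) (v * s - u * t) = 1%Z.
Proof.
  intros k Hk H.
  assert (Hprod : (k * k * qnorm B C (1 + u * s - B * u * t + C * v * t) (v * s - u * t)
                   = qnorm B C u v * qnorm B C (u + k * s) (v + k * t))%Z)
    by (unfold k, qnorm; ring).
  rewrite H in Hprod. fold k in Hprod. nia.
Qed.

Lemma qnorm_proportional B C u1 v1 u2 v2 :
  qnorm B C u1 v1 = qnorm B C u2 v2 -> qnorm B C u1 v1 <> 0%Z ->
  (1 <= v1)%Z -> (1 <= v2)%Z -> (v1 * u2 = u1 * v2)%Z -> u1 = u2 /\ v1 = v2.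
Proof.
  intros Hn Hn0 H1 H2 Hp.
  assert (Hsq : (v1 * v1 * qnorm B C u2 v2 = v2 * v2 * qnorm B C u1 v1)%Z).
  { unfold qnorm.
    transitivity ((v1 * u2) * (v1 * u2) - B * (v1 * u2) * v1 * v2 + C * v1 * v1 * v2 * v2)%Z;
      [ring | rewrite Hp; ring]. }
  rewrite <- Hn in Hsq.
  assert (Hv : ((v1 - v2) * (v1 + v2) * qnorm B C u1 v1 = 0)%Z) by lia.
  apply Z.mul_eq_0 in Hv. destruct Hv as [Hv|]; [|contradiction].
  apply Z.mul_eq_0 in Hv. assert (v1 = v2) by lia. subst v2. split; [nia | reflexivity].
Qed.

Lemma mod_eq_shift a b k : k <> 0%Z -> (a mod k = b mod k)%Z -> exists s, b = (a + k * s)%Z.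
Proof.
  intros Hk H. exists (b / k - a / k)%Z.
  pose proof (Z.div_mod a k Hk). pose proof (Z.div_mod b k Hk). nia.
Qed.

Definition Zrange (K : Z) : list Z := map (fun i => Z.of_nat i - K)%Z (seq 0 (Z.to_nat (2 * K + 1))).

Lemma In_Zrange K x : (- K <= x <= K)%Z -> In x (Zrange K).
Proof.
  intro H. apply in_map_iff. exists (Z.to_nat (x + K)). split; [lia|]. apply in_seq. lia.
Qed.

Lemma pell_solution (g : R) (B C : Z) : irrational g -> g * g + IZR B * g + IZR C = 0 ->
  exists x y, y <> 0%Z /\ qnorm B C x y = 1%Z.
Proof.
  intros Hirr Hg.
  set (K := up (1 + Rabs (IZR B + 2 * g))).
  set (P := approx_seq g).
  set (k := fun j => qnorm B C (fst (P j)) (snd (P j))).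
  assert (Hk : forall j, (- K < k j < K)%Z /\ k j <> 0%Z).
  { intro j. destruct (approx_seq_spec g Hirr j) as [Hgood _].
    destruct (qnorm_good_approx g B C _ Hirr Hg Hgood) as [H0 Hb].
    destruct (archimed (1 + Rabs (IZR B + 2 * g))) as [HK _]. fold K in HK.
    apply Rabs_def2 in Hb. destruct Hb.
    split; [split; apply lt_IZR; rewrite ?opp_IZR; unfold k, P; lra | exact H0]. }
  (* two of the approximations share the norm [k] and their residues modulo [k] *)
  set (cls := fun j => (k j, (fst (P j) mod k j)%Z, (snd (P j) mod k j)%Z)).
  set (L := list_prod (list_prod (Zrange K) (Zrange K)) (Zrange K)).
  destruct (pigeonhole cls L (length L)) as (i & j & Hij & Hc); [|lia|].
  { intros j _. destruct (Hk j) as [Hb H0].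
    pose proof (Z.mod_bound_abs (fst (P j)) (k j) H0).
    pose proof (Z.mod_bound_abs (snd (P j)) (k j) H0).
    repeat apply in_prod; apply In_Zrange; lia. }
  injection Hc as Hk_eq Hu Hv.
  destruct (approx_seq_spec g Hirr i) as [[Hvi _] _].
  destruct (approx_seq_spec g Hirr j) as [[Hvj _] _].
  pose proof (approx_seq_decr g Hirr i j (proj1 Hij)) as Hdec.
  destruct (Hk i) as [_ Hk0].
  unfold k in Hk_eq, Hu, Hv, Hk0. fold P in Hvi, Hvj, Hdec.
  destruct (P i) as [u1 v1], (P j) as [u2 v2]. simpl in *.
  rewrite <- Hk_eq in Hu, Hv.
  destruct (mod_eq_shift u1 u2 _ Hk0 Hu) as [s ->].
  destruct (mod_eq_shift v1 v2 _ Hk0 Hv) as [t ->].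
  exists (1 + u1 * s - B * u1 * t + C * v1 * t)%Z, (v1 * s - u1 * t)%Z. split.
  - intro Hy.
    destruct (qnorm_proportional B C u1 v1 (u1 + qnorm B C u1 v1 * s) (v1 + qnorm B C u1 v1 * t))
      as [Eu Ev]; auto; [nia|].
    rewrite <- Eu, <- Ev in Hdec. lra.
  - apply qnorm_quotient; auto.
Qed.

Lemma pos_eig_of_eigvec al A : inGL2Z A -> eigvec al A ->
  eigval al A <> 1 -> eigval al A <> -1 -> exists B, pos_eig al B /\ 1 < eigval al B.
Proof.
  intros G E N1 N2.
  assert (H2 : pos_eig al (mat2_mul A A) /\ eigval al (mat2_mul A A) <> 1).
  { unfold pos_eig. rewrite eigval_mul by exact E.
    pose proof (eigval_neq0 al A G E) as Hne.
    repeat split; auto using inGL2Z_mul, eigvec_mul.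
    - apply Rsqr_pos_lt. assumption.
    - intro H1. assert (Hf : (eigval al A - 1) * (eigval al A + 1) = 0) by lra.
      apply Rmult_integral in Hf. destruct Hf; [apply N1 | apply N2]; lra. }
  destruct H2 as [HP H1]. destruct (Rlt_or_le 1 (eigval al (mat2_mul A A))) as [h|h].
  - exists (mat2_mul A A); auto.
  - exists (mat2_inv (mat2_mul A A)). split; [apply pos_eig_inv, HP|].
    destruct HP as (G2 & E2 & P2). rewrite eigval_inv by assumption.
    rewrite <- Rinv_1. apply Rinv_lt_contravar; lra.
Qed.

Lemma pos_eig_nontrivial al : quadratic_irrational al ->
  exists A, pos_eig al A /\ 1 < eigval al A.
Proof.
  intros [Hirr (a & b & c & Ha & Hq)].
  assert (Ha' : IZR a <> 0) by (apply not_0_IZR; auto).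
  (* [a al] is a root of the monic [X^2 + b X + a c] *)
  set (g := IZR a * al).
  assert (Hgirr : irrational g).
  { intros p q Hq0 Hgq. apply (Hirr p (a * q)%Z); [lia|]. rewrite mult_IZR.
    apply not_0_IZR in Hq0. apply (Rmult_eq_reg_l (IZR a)); auto.
    unfold g in Hgq. rewrite Hgq. field. auto. }
  assert (Hgq : g * g + IZR b * g + IZR (a * c) = 0).
  { unfold g. rewrite mult_IZR.
    transitivity (IZR a * (IZR a * al ^ 2 + IZR b * al + IZR c)); [ring | rewrite Hq; ring]. }
  destruct (pell_solution g b (a * c) Hgirr Hgq) as (x & y & Hy & Hn).
  (* the unit [x + y g] of [Z[g]] acting on the basis [(1, al)] *)
  apply (pos_eig_of_eigvec al (Mat2 x (a * y) (- c * y) (x - b * y))).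
  - left. unfold det2, qnorm in *; simpl. lia.
  - unfold eigvec, eigval; simpl. push_IZR.
    transitivity (IZR x * al - IZR y * (IZR a * al ^ 2 + IZR b * al + IZR c) + IZR y * (IZR a * al * al));
      [ring | rewrite Hq; ring].
  - unfold eigval; simpl. intro H.
    destruct (irrational_lin_indep al (x - 1) (a * y) Hirr) as [_ H2]; [rewrite minus_IZR; simpl; lra|].
    apply Z.mul_eq_0 in H2; lia.
  - unfold eigval; simpl. intro H.
    destruct (irrational_lin_indep al (x + 1) (a * y) Hirr) as [_ H2]; [rewrite plus_IZR; simpl; lra|].
    apply Z.mul_eq_0 in H2; lia.
Qed.

(** * Integrals over the torus *)

Lemma continuity_affine h q u : continuity h -> continuity (fun t => h (q * t + u)).
Proof.
  intros H x. apply (continuity_pt_comp (fun t => q * t + u) h x); [|apply H].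
  apply continuity_pt_plus; [|apply continuity_pt_const; intros a b; reflexivity].
  apply continuity_pt_mult; [apply continuity_pt_const; intros a b; reflexivity|].
  apply derivable_continuous_pt, derivable_pt_id.
Qed.

Lemma ex_RInt_continuity h a b : continuity h -> ex_RInt h a b.
Proof.
  intros H. apply (ex_RInt_continuous (V := R_CompleteNormedModule)).
  intros z _. apply continuity_pt_filterlim, H.
Qed.

Lemma Rint_RInt h a b : continuity h -> a <= b -> Rint h a b = RInt h a b.
Proof.
  intros Hc Hab. unfold Rint.
  assert (pr : Riemann_integrable h a b) by (apply continuity_implies_RiemannInt; auto).
  destruct (epsilon_spec (inhabits 0) (fun I => exists pr : Riemann_integrable h a b, RiemannInt pr = I))
    as [pr' <-]; [exists (RiemannInt pr), pr; reflexivity|].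
  symmetry. apply RInt_Reals.
Qed.

Lemma periodic_Z {T : Type} (h : R -> T) : (forall x, h (x + 2 * PI) = h x) ->
  forall (k : Z) x, h (x + 2 * PI * IZR k) = h x.
Proof.
  intros H.
  assert (Hnat : forall (k : nat) x, h (x + 2 * PI * INR k) = h x).
  { induction k as [|k IH]; intro x; [simpl; f_equal; ring|].
    rewrite S_INR. replace (x + 2 * PI * (INR k + 1)) with ((x + 2 * PI * INR k) + 2 * PI) by ring.
    rewrite H. apply IH. }
  intros k x. destruct (Z_le_gt_dec 0 k) as [hk|hk].
  - rewrite <- (Z2Nat.id k), <- INR_IZR_INZ by exact hk. apply Hnat.
  - replace k with (- Z.of_nat (Z.to_nat (- k)))%Z by lia. rewrite opp_IZR, <- INR_IZR_INZ.
    rewrite <- (Hnat (Z.to_nat (- k)) (x + 2 * PI * - INR (Z.to_nat (- k)))).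
    f_equal. ring.
Qed.

Lemma cos_period x : cos (x + 2 * PI) = cos x.
Proof. rewrite cos_plus, cos_2PI, sin_2PI. ring. Qed.

Lemma sin_period x : sin (x + 2 * PI) = sin x.
Proof. rewrite sin_plus, cos_2PI, sin_2PI. ring. Qed.

Section PeriodicIntegral.
Variable h : R -> R.
Hypothesis h_cont : continuity h.
Hypothesis h_per : forall x, h (x + 2 * PI) = h x.

Lemma RInt_period_shift x : RInt h x (x + 2 * PI) = RInt h 0 (2 * PI).
Proof.
  assert (Hex : forall a b, ex_RInt h a b) by (intros; apply ex_RInt_continuity, h_cont).
  assert (E : RInt h (2 * PI) (x + 2 * PI) = RInt h 0 x).
  { pose proof (RInt_comp_lin h 1 (2 * PI) 0 x (Hex _ _)) as E.
    rewrite Rmult_0_r, Rplus_0_l, Rmult_1_l in E. rewrite <- E.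
    apply RInt_ext. intros y _. unfold scal; simpl; unfold mult; simpl.
    replace (1 * y + 2 * PI) with (y + 2 * PI) by ring. rewrite h_per. ring. }
  pose proof (RInt_Chasles h x 0 (2 * PI) (Hex _ _) (Hex _ _)) as C1.
  pose proof (RInt_Chasles h x (2 * PI) (x + 2 * PI) (Hex _ _) (Hex _ _)) as C2.
  pose proof (opp_RInt_swap h x 0 (Hex _ _)) as C3.
  unfold plus, opp in *; simpl in *. lra.
Qed.

Lemma RInt_period_affine c e : e = 1 \/ e = -1 ->
  RInt (fun t => h (e * t + c)) 0 (2 * PI) = RInt h 0 (2 * PI).
Proof.
  intros He. assert (Hex : forall a b, ex_RInt h a b) by (intros; apply ex_RInt_continuity, h_cont).
  pose proof (RInt_comp_lin h e c 0 (2 * PI) (Hex _ _)) as E.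
  rewrite Rmult_0_r, Rplus_0_l in E.
  rewrite RInt_scal in E by apply ex_RInt_continuity, continuity_affine, h_cont.
  destruct He as [->| ->]; unfold scal in E; simpl in E; unfold mult in E; simpl in E.
  - replace (1 * (2 * PI) + c) with (c + 2 * PI) in E by ring.
    rewrite RInt_period_shift in E. lra.
  - rewrite <- (opp_RInt_swap h) in E by apply Hex.
    replace (-1 * (2 * PI) + c) with (c - 2 * PI) in E by ring.
    rewrite <- (RInt_period_shift (c - 2 * PI)).
    replace (c - 2 * PI + 2 * PI) with c by ring. unfold opp in E; simpl in E.
    lra.
Qed.

End PeriodicIntegral.

Lemma RInt_cos_affine (q : Z) u : q <> 0%Z -> RInt (fun t => cos (IZR q * t + u)) 0 (2 * PI) = 0.
Proof.
  intros Hq. apply not_0_IZR in Hq.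
  rewrite (is_RInt_unique _ _ _ (sin (IZR q * (2 * PI) + u) / IZR q - sin (IZR q * 0 + u) / IZR q)).
  - rewrite Rmult_0_r, Rplus_0_l. replace (IZR q * (2 * PI) + u) with (u + 2 * PI * IZR q) by ring.
    rewrite (periodic_Z sin sin_period). apply Rminus_diag.
  - apply (is_RInt_derive (fun t => sin (IZR q * t + u) / IZR q)).
    + intros x _. auto_derive; [auto | field; auto].
    + intros x _. apply continuity_pt_filterlim, continuity_affine, continuity_cos.
Qed.

Lemma RInt_sin_affine (q : Z) u : q <> 0%Z -> RInt (fun t => sin (IZR q * t + u)) 0 (2 * PI) = 0.
Proof.
  intros Hq. apply not_0_IZR in Hq.
  rewrite (is_RInt_unique _ _ _ (- cos (IZR q * (2 * PI) + u) / IZR q - - cos (IZR q * 0 + u) / IZR q)).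
  - rewrite Rmult_0_r, Rplus_0_l. replace (IZR q * (2 * PI) + u) with (u + 2 * PI * IZR q) by ring.
    rewrite (periodic_Z cos cos_period). apply Rminus_diag.
  - apply (is_RInt_derive (fun t => - cos (IZR q * t + u) / IZR q)).
    + intros x _. auto_derive; [auto | field; auto].
    + intros x _. apply continuity_pt_filterlim, continuity_affine, continuity_sin.
Qed.

Lemma continuity_2d_pt_comp (g u v : R -> R -> R) x y :
  continuity_2d_pt g (u x y) (v x y) -> continuity_2d_pt u x y -> continuity_2d_pt v x y ->
  continuity_2d_pt (fun s t => g (u s t) (v s t)) x y.
Proof.
  rewrite !continuity_2d_pt_filterlim. intros Hg Hu Hv.
  apply (filterlim_comp _ _ _ (fun z => (u (fst z) (snd z), v (fst z) (snd z)))
           (fun z => g (fst z) (snd z)) _ (filter_prod (locally (u x y)) (locally (v x y)))).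
  - apply filterlim_pair; assumption.
  - intros P HP. destruct (Hg P HP) as [eps Heps].
    apply (Filter_prod _ _ _ (ball (u x y) eps) (ball (v x y) eps));
      [exists eps; auto | exists eps; auto | intros p q Hp Hq; apply Heps; split; auto].
Qed.

Lemma continuity_2d_pt_linear (p q : R) x y : continuity_2d_pt (fun s t => p * s + q * t) x y.
Proof.
  apply continuity_2d_pt_plus; apply continuity_2d_pt_mult;
    auto using continuity_2d_pt_const, continuity_2d_pt_id1, continuity_2d_pt_id2.
Qed.

Definition continuity2 (g : R -> R -> R) : Prop := forall x y, continuity_2d_pt g x y.

Lemma continuity2_swap g : continuity2 g -> continuity2 (fun s t => g t s).
Proof. intros H x y eps. destruct (H y x eps) as [d Hd]. exists d. intros u v Hu Hv. apply Hd; auto. Qed.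

Lemma continuity2_slice g s : continuity2 g -> continuity (g s).
Proof.
  intros H t eps He. destruct (H s t (mkposreal eps He)) as [d Hd].
  exists d. split; [apply cond_pos|]. intros x [_ Hx]. simpl in *. unfold R_dist in *.
  apply Hd; auto. rewrite Rminus_diag, Rabs_R0. apply cond_pos.
Qed.

Lemma continuity2_wave h (p q : R) : continuity h -> continuity2 (fun s t => h (p * s + q * t)).
Proof. intros H x y. apply (continuity_1d_2d_pt_comp h); [apply H | apply continuity_2d_pt_linear]. Qed.

Lemma RInt_abs_bound h a b M : continuity h ->
  (forall t, Rmin a b <= t <= Rmax a b -> Rabs (h t) <= M) ->
  Rabs (RInt h a b) <= Rabs (b - a) * M.
Proof.
  intros Hc HM. destruct (Rle_or_lt a b) as [Hab|Hab].
  - rewrite (Rabs_right (b - a)) by lra.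
    apply abs_RInt_le_const; auto using ex_RInt_continuity.
    intros t Ht. apply HM. rewrite Rmin_left, Rmax_right; lra.
  - rewrite <- opp_RInt_swap by apply ex_RInt_continuity, Hc. unfold opp; simpl.
    rewrite Rabs_Ropp, (Rabs_left (b - a)) by lra. replace (- (b - a)) with (a - b) by ring.
    apply abs_RInt_le_const; [lra | apply ex_RInt_continuity, Hc|].
    intros t Ht. apply HM. rewrite Rmin_right, Rmax_left; lra.
Qed.

Lemma continuity_RInt_param g a b : continuity2 g -> continuity (fun s => RInt (fun t => g s t) a b).
Proof.
  intros H s0 eps He.
  set (w := Rabs (b - a) + 1).
  assert (Hw : 0 < w) by (unfold w; pose proof (Rabs_pos (b - a)); lra).
  assert (He' : 0 < eps / (2 * w)) by (apply Rdiv_lt_0_compat; lra).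
  destruct (uniform_continuity_2d_1d' g (Rmin a b) (Rmax a b) s0 (fun t _ => H s0 t)
              (mkposreal _ He')) as [d Hd].
  exists d. split; [apply cond_pos|]. intros s [_ Hs]. simpl in *. unfold R_dist in *.
  assert (Hsl : forall s, continuity (g s)) by (intro; apply continuity2_slice, H).
  replace (RInt (fun t => g s t) a b - RInt (fun t => g s0 t) a b)
    with (RInt (fun t => g s t - g s0 t) a b).
  2:{ pose proof (RInt_minus (g s) (g s0) a b (ex_RInt_continuity _ _ _ (Hsl s))
                    (ex_RInt_continuity _ _ _ (Hsl s0))) as E.
      unfold minus, plus, opp in E; simpl in E. exact E. }
  eapply Rle_lt_trans; [apply RInt_abs_bound with (M := eps / (2 * w))|].
  - intro x. apply continuity_pt_minus; apply Hsl.
  - intros t Ht. left. pose proof (cond_pos d). destruct (Rabs_def2 _ _ Hs).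
    apply Hd; auto; try lra. rewrite Rminus_diag, Rabs_R0. apply cond_pos.
  - unfold w. pose proof (Rabs_pos (b - a)).
    apply (Rmult_lt_reg_r (2 * (Rabs (b - a) + 1))); [lra|].
    field_simplify; [|lra]. nra.
Qed.

Lemma is_derive_RInt_upper g a x : continuity2 g ->
  is_derive (fun x => RInt (fun t => RInt (fun s => g s t) 0 x) 0 a) x (RInt (fun t => g x t) 0 a).
Proof.
  intros H.
  assert (Hcol : forall t, continuity (fun s => g s t))
    by (intro t; exact (continuity2_slice _ t (continuity2_swap g H))).
  assert (Dcol : forall t u, is_derive (fun z => RInt (fun s => g s t) 0 z) u (g u t)).
  { intros t u. apply (is_derive_RInt (fun s => g s t) (RInt (fun s => g s t) 0) 0 u).
    - apply filter_forall. intro y.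
      apply (RInt_correct (V := R_CompleteNormedModule)), ex_RInt_continuity, Hcol.
    - apply continuity_pt_filterlim, Hcol. }
  replace (RInt (fun t => g x t) 0 a)
    with (RInt (fun t => Derive (fun u => RInt (fun s => g s t) 0 u) x) 0 a).
  2:{ apply RInt_ext. intros t _. apply is_derive_unique, Dcol. }
  apply (is_derive_RInt_param (fun u t => RInt (fun s => g s t) 0 u) 0 a x).
  - apply filter_forall. intros y t _. eexists. apply Dcol.
  - intros t _. apply continuity_2d_pt_ext with (f := g); [|apply H].
    intros u v. symmetry. apply is_derive_unique, Dcol.
  - apply filter_forall. intro y. apply ex_RInt_continuity.
    exact (continuity_RInt_param (fun t s => g s t) 0 y (continuity2_swap g H)).
Qed.

Lemma RInt_swap g a b : continuity2 g ->
  RInt (fun s => RInt (fun t => g s t) 0 a) 0 b = RInt (fun t => RInt (fun s => g s t) 0 b) 0 a.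
Proof.
  intros H.
  set (phi := fun s => RInt (fun t => g s t) 0 a).
  assert (Hphi : continuity phi) by (apply continuity_RInt_param, H).
  (* both sides, as functions of the upper bound [b], have derivative [phi] and vanish at 0 *)
  set (F := fun x => RInt phi 0 x).
  set (G := fun x => RInt (fun t => RInt (fun s => g s t) 0 x) 0 a).
  assert (Z : forall x, is_derive (fun x => F x - G x) x 0).
  { intro x. replace 0 with (phi x - phi x) by ring.
    apply (is_derive_minus F G); [|apply is_derive_RInt_upper, H].
    apply (is_derive_RInt phi (RInt phi 0) 0 x).
    - apply filter_forall. intro y. apply RInt_correct, ex_RInt_continuity, Hphi.
    - apply continuity_pt_filterlim, Hphi. }
  pose proof (is_RInt_derive (fun x => F x - G x) (fun _ => 0) 0 b (fun x _ => Z x)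
                (fun x _ => continuous_const 0 x)) as I.
  apply is_RInt_unique in I. rewrite RInt_const in I.
  unfold F, G in I. rewrite !RInt_point in I.
  rewrite (RInt_ext (fun t => RInt (fun s => g s t) 0 0) (fun _ => 0)) in I
    by (intros; apply (RInt_point (V := R_CompleteNormedModule))).
  rewrite RInt_const in I.
  unfold minus, plus, opp, scal, zero in I; simpl in I; unfold mult in I; simpl in I.
  unfold F. lra.
Qed.

Definition periodic2 {T : Type} (g : R -> R -> T) : Prop :=
  (forall s t, g (s + 2 * PI) t = g s t) /\ (forall s t, g s (t + 2 * PI) = g s t).
Definition cont_periodic2 (g : R -> R -> R) : Prop := continuity2 g /\ periodic2 g.

Definition torus_RInt (g : R -> R -> R) : R :=
  RInt (fun s => RInt (fun t => g s t) 0 (2 * PI)) 0 (2 * PI).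

Lemma torus_integral_RInt g : continuity2 g -> torus_integral g = / (4 * PI ^ 2) * torus_RInt g.
Proof.
  intros H. pose proof PI_RGT_0. unfold torus_integral, torus_RInt. f_equal.
  replace (fun s => Rint (fun t => g s t) 0 (2 * PI)) with (fun s => RInt (fun t => g s t) 0 (2 * PI)).
  - apply Rint_RInt; [apply continuity_RInt_param, H | lra].
  - apply functional_extensionality. intro s. symmetry. apply Rint_RInt; [apply continuity2_slice, H | lra].
Qed.

Lemma torus_RInt_swap g : continuity2 g -> torus_RInt (fun s t => g t s) = torus_RInt g.
Proof. intros H. exact (RInt_swap (fun s t => g t s) _ _ (continuity2_swap g H)). Qed.

Lemma torus_RInt_lower g e f c : cont_periodic2 g -> e = 1 \/ e = -1 -> f = 1 \/ f = -1 ->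
  torus_RInt (fun s t => g (e * s) (c * s + f * t)) = torus_RInt g.
Proof.
  intros [Hc [P1 P2]] He Hf. unfold torus_RInt.
  rewrite (RInt_ext _ (fun s => RInt (fun t => g (e * s) t) 0 (2 * PI))).
  2:{ intros s _. etransitivity;
        [|exact (RInt_period_affine (g (e * s)) (continuity2_slice g _ Hc) (P2 (e * s)) (c * s) f Hf)].
      apply RInt_ext. intros t _. f_equal. ring. }
  set (phi := fun s => RInt (fun t => g s t) 0 (2 * PI)).
  assert (Hphi : continuity phi) by (apply continuity_RInt_param, Hc).
  assert (Pphi : forall x, phi (x + 2 * PI) = phi x)
    by (intro x; unfold phi; apply RInt_ext; intros; apply P1).
  rewrite <- (RInt_period_affine phi Hphi Pphi 0 e He).
  apply RInt_ext. intros x _. unfold phi. rewrite Rplus_0_r. reflexivity.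
Qed.

Definition lincomp {T : Type} (B : mat2) (g : R -> R -> T) : R -> R -> T :=
  fun s t => g (IZR (ma B) * s + IZR (mb B) * t) (IZR (mc B) * s + IZR (md B) * t).

Lemma lincomp_mul {T : Type} A B (g : R -> R -> T) :
  lincomp B (lincomp A g) = lincomp (mat2_mul A B) g.
Proof.
  apply functional_extensionality; intro s. apply functional_extensionality; intro t.
  unfold lincomp, mat2_mul; simpl. push_IZR. f_equal; ring.
Qed.

Lemma lincomp_id {T : Type} (g : R -> R -> T) : lincomp mat2_id g = g.
Proof.
  apply functional_extensionality; intro s. apply functional_extensionality; intro t.
  unfold lincomp; simpl. f_equal; ring.
Qed.

Lemma continuity2_lincomp B g : continuity2 g -> continuity2 (lincomp B g).
Proof.
  intros H x y. unfold lincomp.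
  apply (continuity_2d_pt_comp g); [apply H | apply continuity_2d_pt_linear ..].
Qed.

Lemma periodic2_Z {T : Type} (g : R -> R -> T) : periodic2 g ->
  forall k l s t, g (s + 2 * PI * IZR k) (t + 2 * PI * IZR l) = g s t.
Proof.
  intros [P1 P2] k l s t.
  rewrite (periodic_Z (fun x => g x (t + 2 * PI * IZR l))) by (intro; apply P1).
  apply (periodic_Z (g s)). intro; apply P2.
Qed.

Lemma periodic2_lincomp {T : Type} B (g : R -> R -> T) : periodic2 g -> periodic2 (lincomp B g).
Proof.
  intros Hp. split; intros s t; unfold lincomp.
  - rewrite <- (periodic2_Z g Hp (ma B) (mc B) (IZR (ma B) * s + IZR (mb B) * t)). f_equal; ring.
  - rewrite <- (periodic2_Z g Hp (mb B) (md B) (IZR (ma B) * s + IZR (mb B) * t)). f_equal; ring.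
Qed.

Lemma cont_periodic2_lincomp B g : cont_periodic2 g -> cont_periodic2 (lincomp B g).
Proof. intros [Hc Hp]. split; [apply continuity2_lincomp | apply periodic2_lincomp]; auto. Qed.

Definition mat2_swap : mat2 := Mat2 0 1 1 0.

Lemma GL2Z_ind (P : mat2 -> Prop) :
  (forall A B, P A -> P B -> P (mat2_mul A B)) -> P mat2_swap ->
  (forall A, inGL2Z A -> mb A = 0%Z -> P A) ->
  forall A, inGL2Z A -> P A.
Proof.
  intros Pmul Pswap Plow.
  assert (Pup : forall k, P (Mat2 1 k 0 1)).
  { intro k. replace (Mat2 1 k 0 1) with (mat2_mul mat2_swap (mat2_mul (Mat2 1 0 k 1) mat2_swap))
      by (unfold mat2_mul, mat2_swap; cbn [ma mb mc md]; f_equal; ring).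
    apply Pmul, Pmul; auto. apply Plow; [left; unfold det2; cbn [ma mb mc md]; ring | reflexivity]. }
  assert (Pback : forall A E E', P (mat2_mul A E) -> P E' -> mat2_mul E E' = mat2_id -> P A).
  { intros A E E' H1 H2 HE. rewrite <- (mat2_mulm1 A), <- HE, mat2_mulA. auto. }
  (* Euclid's algorithm on the first row [(a, b)], by column operations *)
  intros A HA. remember (Z.to_nat (Z.abs (ma A) + Z.abs (mb A))) as n eqn:Hn.
  assert (Hle : (Z.abs (ma A) + Z.abs (mb A) <= Z.of_nat n)%Z) by lia. clear Hn.
  revert A HA Hle. induction n as [|n IH]; intros [a b c d] HG Hle; cbn [ma mb] in Hle.
  { exfalso. unfold inGL2Z, det2 in HG; simpl in HG. assert (a = 0%Z /\ b = 0%Z) as [-> ->] by lia. lia. }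
  destruct (Z.eq_dec b 0) as [Hb|Hb]; [apply Plow; auto|].
  destruct (Z.eq_dec a 0) as [Ha|Ha].
  { apply (Pback _ mat2_swap mat2_swap); [| exact Pswap | reflexivity].
    apply Plow; [apply inGL2Z_mul; [exact HG | right; reflexivity] | simpl; lia]. }
  assert (Hk : exists k, (k = 1 \/ k = -1)%Z /\
             ((Z.abs a <= Z.abs b -> Z.abs (a * k + b) < Z.abs b) /\
              (Z.abs b < Z.abs a -> Z.abs (a + b * k) < Z.abs a))%Z).
  { destruct (Z_lt_le_dec 0 a), (Z_lt_le_dec 0 b);
      [exists (-1)%Z | exists 1%Z | exists 1%Z | exists (-1)%Z]; lia. }
  destruct Hk as (k & Hk & Hup & Hlow).
  destruct (Z_le_gt_dec (Z.abs a) (Z.abs b)) as [Hab|Hab].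
  - apply (Pback _ (Mat2 1 k 0 1) (Mat2 1 (- k) 0 1));
      [| apply Pup | unfold mat2_mul, mat2_id; cbn [ma mb mc md]; f_equal; ring].
    apply IH; [apply inGL2Z_mul; [exact HG | left; unfold det2; cbn [ma mb mc md]; ring]|].
    unfold mat2_mul; cbn [ma mb mc md]. specialize (Hup Hab).
    replace (a * 1 + b * 0)%Z with a by ring. replace (a * k + b * 1)%Z with (a * k + b)%Z by ring. lia.
  - apply (Pback _ (Mat2 1 0 k 1) (Mat2 1 0 (- k) 1));
      [| apply Plow; [left; unfold det2; cbn [ma mb mc md]; ring | reflexivity]
       | unfold mat2_mul, mat2_id; cbn [ma mb mc md]; f_equal; ring].
    apply IH; [apply inGL2Z_mul; [exact HG | left; unfold det2; cbn [ma mb mc md]; ring]|].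
    unfold mat2_mul; cbn [ma mb mc md]. specialize (Hlow ltac:(lia)).
    replace (a * 1 + b * k)%Z with (a + b * k)%Z by ring. replace (a * 0 + b * 1)%Z with b by ring. lia.
Qed.

Lemma Z_mul_unit a d : (a * d = 1 \/ a * d = -1)%Z ->
  (IZR a = 1 \/ IZR a = -1) /\ (IZR d = 1 \/ IZR d = -1).
Proof.
  intros H. assert (Hu : ((a = 1 \/ a = -1) /\ (d = 1 \/ d = -1))%Z).
  { destruct H as [H|H]; split.
    - apply (Z.mul_eq_1 a d H).
    - apply (Z.mul_eq_1 d a). lia.
    - assert (- a = 1 \/ - a = -1)%Z by (apply (Z.mul_eq_1 (- a) d); lia). lia.
    - assert (- d = 1 \/ - d = -1)%Z by (apply (Z.mul_eq_1 (- d) a); lia). lia. }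
  destruct Hu as [[-> | ->] [-> | ->]]; auto.
Qed.

Lemma torus_RInt_lincomp B g : inGL2Z B -> cont_periodic2 g ->
  torus_RInt (lincomp B g) = torus_RInt g.
Proof.
  intros HB. revert g. pattern B. apply GL2Z_ind; auto; clear B HB.
  - intros A B HA HB g Hg. rewrite <- lincomp_mul, HB by (apply cont_periodic2_lincomp, Hg). auto.
  - intros g [Hc _]. rewrite <- (torus_RInt_swap g Hc). unfold lincomp, mat2_swap; cbn [ma mb mc md].
    f_equal. apply functional_extensionality; intro s. apply functional_extensionality; intro t.
    f_equal; ring.
  - intros [a b c d] HG Hb g Hg. cbn [mb] in Hb. subst b. unfold inGL2Z, det2 in HG; cbn [ma mb mc md] in HG.
    destruct (Z_mul_unit a d ltac:(lia)) as [Ha Hd].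
    rewrite <- (torus_RInt_lower g (IZR a) (IZR d) (IZR c) Hg Ha Hd).
    unfold lincomp; cbn [ma mb mc md]. f_equal.
    apply functional_extensionality; intro s. apply functional_extensionality; intro t.
    f_equal; ring.
Qed.

Lemma torus_integral_lincomp B g : inGL2Z B -> cont_periodic2 g ->
  torus_integral (lincomp B g) = torus_integral g.
Proof.
  intros HB Hg. pose proof (cont_periodic2_lincomp B g Hg) as [Hc' _].
  rewrite !torus_integral_RInt, torus_RInt_lincomp by (auto; apply Hg). reflexivity.
Qed.

(** * Fourier coefficients and the action of GL(2,Z) *)

Lemma Cmod_ge_fst z : Rabs (fst z) <= Defs.Cmod z.
Proof.
  unfold Defs.Cmod. rewrite <- sqrt_Rsqr_abs. apply sqrt_le_1_alt.
  unfold Rsqr. pose proof (pow2_ge_0 (snd z)). simpl. lra.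
Qed.

Lemma Cmod_ge_snd z : Rabs (snd z) <= Defs.Cmod z.
Proof.
  unfold Defs.Cmod. rewrite <- sqrt_Rsqr_abs. apply sqrt_le_1_alt.
  unfold Rsqr. pose proof (pow2_ge_0 (fst z)). simpl. lra.
Qed.

Lemma Cmod_le_sum z : Defs.Cmod z <= Rabs (fst z) + Rabs (snd z).
Proof.
  unfold Defs.Cmod. pose proof (Rabs_pos (fst z)). pose proof (Rabs_pos (snd z)).
  rewrite <- (sqrt_Rsqr (Rabs (fst z) + Rabs (snd z))) by lra. apply sqrt_le_1_alt.
  rewrite <- (pow2_abs (fst z)), <- (pow2_abs (snd z)). unfold Rsqr. nra.
Qed.

Definition torus_re (f : torus_fun) : R -> R -> R := fun s t => fst (f s t).
Definition torus_im (f : torus_fun) : R -> R -> R := fun s t => snd (f s t).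

Lemma is_CT2_parts f : is_CT2 f <-> cont_periodic2 (torus_re f) /\ cont_periodic2 (torus_im f).
Proof.
  unfold torus_re, torus_im. split.
  - intros (P1 & P2 & Hc).
    assert (Hpart : forall p : R * R -> R, (forall z, Rabs (p z) <= Defs.Cmod z) ->
              (forall z w, p (Csub z w) = p z - p w) -> cont_periodic2 (fun s t => p (f s t))).
    { intros p Hp Hsub. split; [|split; intros s t; rewrite ?P1, ?P2; reflexivity].
      intros x y eps. destruct (Hc x y eps (cond_pos eps)) as (d & Hd & H).
      exists (mkposreal d Hd). intros u v Hu Hv. rewrite <- Hsub.
      eapply Rle_lt_trans; [apply Hp | exact (H u v Hu Hv)]. }
    split; apply Hpart; auto using Cmod_ge_fst, Cmod_ge_snd.
  - intros [[Hc1 [P1 Q1]] [Hc2 [P2 Q2]]]. split; [|split].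
    + intros s t. rewrite (surjective_pairing (f s t)), <- P1, <- P2. apply surjective_pairing.
    + intros s t. rewrite (surjective_pairing (f s t)), <- Q1, <- Q2. apply surjective_pairing.
    + intros s t eps He. assert (He2 : 0 < eps / 2) by lra.
      destruct (Hc1 s t (mkposreal _ He2)) as [d1 H1].
      destruct (Hc2 s t (mkposreal _ He2)) as [d2 H2].
      exists (Rmin d1 d2). split; [apply Rmin_pos; apply cond_pos|]. intros s' t' Hs Ht.
      eapply Rle_lt_trans; [apply Cmod_le_sum|]. unfold Csub; simpl.
      assert (A1 := H1 s' t' (Rlt_le_trans _ _ _ Hs (Rmin_l _ _)) (Rlt_le_trans _ _ _ Ht (Rmin_l _ _))).
      assert (A2 := H2 s' t' (Rlt_le_trans _ _ _ Hs (Rmin_r _ _)) (Rlt_le_trans _ _ _ Ht (Rmin_r _ _))).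
      simpl in A1, A2. lra.
Qed.

Lemma is_CT2_piA A f : is_CT2 f -> is_CT2 (piA A f).
Proof.
  rewrite !is_CT2_parts. intros [H1 H2].
  split; [exact (cont_periodic2_lincomp A _ H1) | exact (cont_periodic2_lincomp A _ H2)].
Qed.

Lemma cont_periodic2_plus g h : cont_periodic2 g -> cont_periodic2 h ->
  cont_periodic2 (fun s t => g s t + h s t).
Proof.
  intros [Cg [Pg Qg]] [Ch [Ph Qh]]. split; [intros x y; apply continuity_2d_pt_plus; auto|].
  split; intros s t; rewrite ?Pg, ?Ph, ?Qg, ?Qh; reflexivity.
Qed.

Lemma cont_periodic2_minus g h : cont_periodic2 g -> cont_periodic2 h ->
  cont_periodic2 (fun s t => g s t - h s t).
Proof.
  intros [Cg [Pg Qg]] [Ch [Ph Qh]]. split; [intros x y; apply continuity_2d_pt_minus; auto|].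
  split; intros s t; rewrite ?Pg, ?Ph, ?Qg, ?Qh; reflexivity.
Qed.

Lemma cont_periodic2_mult g h : cont_periodic2 g -> cont_periodic2 h ->
  cont_periodic2 (fun s t => g s t * h s t).
Proof.
  intros [Cg [Pg Qg]] [Ch [Ph Qh]]. split; [intros x y; apply continuity_2d_pt_mult; auto|].
  split; intros s t; rewrite ?Pg, ?Ph, ?Qg, ?Qh; reflexivity.
Qed.

Lemma cont_periodic2_wave h (m n : Z) : continuity h -> (forall x, h (x + 2 * PI) = h x) ->
  cont_periodic2 (fun s t => h (IZR m * s + IZR n * t)).
Proof.
  intros Hc Hp. split; [apply continuity2_wave, Hc|].
  split; intros s t.
  - rewrite <- (periodic_Z h Hp m (IZR m * s + IZR n * t)). f_equal. ring.
  - rewrite <- (periodic_Z h Hp n (IZR m * s + IZR n * t)). f_equal. ring.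
Qed.

Definition fourier_re (f : torus_fun) (m n : Z) : R -> R -> R := fun s t =>
  fst (f s t) * cos (IZR m * s + IZR n * t) + snd (f s t) * sin (IZR m * s + IZR n * t).
Definition fourier_im (f : torus_fun) (m n : Z) : R -> R -> R := fun s t =>
  snd (f s t) * cos (IZR m * s + IZR n * t) - fst (f s t) * sin (IZR m * s + IZR n * t).

Lemma fourier_split f m n :
  fourier f m n = (torus_integral (fourier_re f m n), torus_integral (fourier_im f m n)).
Proof. reflexivity. Qed.

Lemma cont_periodic2_fourier f m n : is_CT2 f ->
  cont_periodic2 (fourier_re f m n) /\ cont_periodic2 (fourier_im f m n).
Proof.
  rewrite is_CT2_parts. intros [Hre Him].
  pose proof (cont_periodic2_wave cos m n continuity_cos cos_period).
  pose proof (cont_periodic2_wave sin m n continuity_sin sin_period).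
  split; [apply cont_periodic2_plus | apply cont_periodic2_minus]; apply cont_periodic2_mult; auto.
Qed.

Lemma wave_lincomp (m n : Z) A s t :
  IZR (m * ma A + n * mc A) * s + IZR (m * mb A + n * md A) * t
  = IZR m * (IZR (ma A) * s + IZR (mb A) * t) + IZR n * (IZR (mc A) * s + IZR (md A) * t).
Proof. push_IZR. ring. Qed.

Lemma fourier_piA A f m n : inGL2Z A -> is_CT2 f ->
  fourier (piA A f) (m * ma A + n * mc A) (m * mb A + n * md A) = fourier f m n.
Proof.
  intros HA Hf. destruct (cont_periodic2_fourier f m n Hf) as [Hre Him].
  rewrite !fourier_split, <- (torus_integral_lincomp A _ HA Hre),
    <- (torus_integral_lincomp A _ HA Him).
  f_equal; f_equal; apply functional_extensionality; intro s; apply functional_extensionality; intro t;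
    unfold fourier_re, fourier_im, lincomp, piA; rewrite wave_lincomp; reflexivity.
Qed.

Definition character (m n : Z) : torus_fun :=
  fun s t => (cos (IZR m * s + IZR n * t), sin (IZR m * s + IZR n * t)).

Lemma is_CT2_character m n : is_CT2 (character m n).
Proof.
  apply is_CT2_parts. split.
  - exact (cont_periodic2_wave cos m n continuity_cos cos_period).
  - exact (cont_periodic2_wave sin m n continuity_sin sin_period).
Qed.

Lemma piA_character A m n :
  piA A (character m n) = character (m * ma A + n * mc A) (m * mb A + n * md A).
Proof.
  apply functional_extensionality; intro s. apply functional_extensionality; intro t.
  unfold piA, character. rewrite wave_lincomp. reflexivity.
Qed.

Lemma RInt_wave_affine h (q : Z) u : h = cos \/ h = sin -> q <> 0%Z ->
  RInt (fun t => h (IZR q * t + u)) 0 (2 * PI) = 0.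
Proof. intros [-> | ->]; [apply RInt_cos_affine | apply RInt_sin_affine]. Qed.

Lemma torus_integral_wave h (p q : Z) : h = cos \/ h = sin -> (p, q) <> (0%Z, 0%Z) ->
  torus_integral (fun s t => h (IZR p * s + IZR q * t)) = 0.
Proof.
  intros Hh Hpq.
  assert (Hc : continuity h) by (destruct Hh as [-> | ->]; [apply continuity_cos | apply continuity_sin]).
  rewrite torus_integral_RInt by (apply continuity2_wave, Hc). unfold torus_RInt.
  destruct (Z.eq_dec q 0) as [->|Hq].
  - assert (Hp : p <> 0%Z) by (intros ->; apply Hpq; reflexivity).
    rewrite (RInt_ext _ (fun s => 2 * PI * h (IZR p * s + 0))).
    + rewrite (RInt_scal (V := R_CompleteNormedModule) (fun s => h (IZR p * s + 0)) _ _ (2 * PI))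
        by apply ex_RInt_continuity, continuity_affine, Hc.
      rewrite RInt_wave_affine by auto. unfold scal; simpl; unfold mult; simpl. ring.
    + intros s _. rewrite (RInt_ext _ (fun _ => h (IZR p * s + 0))) by (intros; f_equal; simpl; ring).
      rewrite RInt_const. unfold scal; simpl; unfold mult; simpl. ring.
  - rewrite (RInt_ext _ (fun _ => 0)).
    + rewrite RInt_const. unfold scal; simpl; unfold mult; simpl. ring.
    + intros s _. etransitivity; [|exact (RInt_wave_affine h q (IZR p * s) Hh Hq)].
      apply RInt_ext. intros t _. f_equal. ring.
Qed.

Lemma fourier_character m n m' n' : fourier (character m n) m' n' =
  (torus_integral (fun s t => cos (IZR (m - m') * s + IZR (n - n') * t)),
   torus_integral (fun s t => sin (IZR (m - m') * s + IZR (n - n') * t))).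
Proof.
  rewrite fourier_split. f_equal; f_equal;
    apply functional_extensionality; intro s; apply functional_extensionality; intro t;
    unfold fourier_re, fourier_im, character; simpl;
    replace (IZR (m - m') * s + IZR (n - n') * t)
      with ((IZR m * s + IZR n * t) - (IZR m' * s + IZR n' * t)) by (push_IZR; ring).
  - rewrite cos_minus. ring.
  - rewrite sin_minus. ring.
Qed.

Lemma fourier_character_other m n m' n' : (m', n') <> (m, n) -> fourier (character m n) m' n' = (0, 0).
Proof.
  intros H. rewrite fourier_character.
  assert (Hpq : (m - m', n - n')%Z <> (0%Z, 0%Z)) by (intro E; injection E; intros; apply H; f_equal; lia).
  rewrite !torus_integral_wave; auto.
Qed.

Lemma fourier_character_same m n : fourier (character m n) m n = (1, 0).
Proof.
  rewrite fourier_character, !Z.sub_diag. pose proof PI_RGT_0.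
  rewrite !torus_integral_RInt by (apply continuity2_wave; apply continuity_cos || apply continuity_sin).
  unfold torus_RInt. simpl. f_equal.
  - rewrite (RInt_ext _ (fun _ => 2 * PI)).
    + rewrite RInt_const. unfold scal; simpl; unfold mult; simpl. field. lra.
    + intros s _. rewrite (RInt_ext _ (fun _ => 1)) by (intros; rewrite !Rmult_0_l, Rplus_0_l; apply cos_0).
      rewrite RInt_const. unfold scal; simpl; unfold mult; simpl. ring.
  - rewrite (RInt_ext _ (fun _ => 0)); [rewrite RInt_const; unfold scal; simpl; unfold mult; simpl; ring|].
    intros s _. rewrite (RInt_ext _ (fun _ => 0)) by (intros; rewrite !Rmult_0_l, Rplus_0_l; apply sin_0).
    rewrite RInt_const. unfold scal; simpl; unfold mult; simpl. ring.
Qed.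

Lemma in_A_character al m n : 0 <= IZR m + al * IZR n -> in_A al (character m n).
Proof.
  intros H. split; [apply is_CT2_character|]. intros m' n' H'. apply fourier_character_other.
  intro E. injection E as -> ->. lra.
Qed.

Lemma GL2Z_row_solve A (m n : Z) : inGL2Z A ->
  exists m' n', m = (m' * ma A + n' * mc A)%Z /\ n = (m' * mb A + n' * md A)%Z.
Proof.
  intros HA. exists (det2 A * (m * md A - n * mc A))%Z, (det2 A * (n * ma A - m * mb A))%Z.
  destruct A as [a b c d]. unfold inGL2Z, det2 in *; cbn [ma mb mc md] in *.
  destruct HA as [H|H]; rewrite H; split;
    [transitivity (m * (a * d - b * c))%Z | transitivity (n * (a * d - b * c))%Z
    |transitivity (- m * (a * d - b * c))%Z | transitivity (- n * (a * d - b * c))%Z];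
    (rewrite H; ring) || ring.
Qed.

Lemma in_A_piA al A f : pos_eig al A -> in_A al f -> in_A al (piA A f).
Proof.
  intros (HG & HE & Hpos) [Hf Hz]. split; [apply is_CT2_piA, Hf|].
  intros m n Hmn. destruct (GL2Z_row_solve A m n HG) as (m' & n' & -> & ->).
  rewrite fourier_piA by auto. apply Hz.
  (* [(m, n) = (m', n') A], so pairing with the eigenvector [(1, al)] scales by [eigval al A] *)
  assert (E : IZR (m' * ma A + n' * mc A) + al * IZR (m' * mb A + n' * md A)
              = eigval al A * (IZR m' + al * IZR n')).
  { unfold eigvec, eigval in *. push_IZR.
    transitivity (IZR m' * (IZR (ma A) + IZR (mb A) * al) + IZR n' * (IZR (mc A) + IZR (md A) * al));
      [ring | rewrite HE; ring]. }
  rewrite E in Hmn. nra.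
Qed.

Lemma piA_mul A B f : piA A (piA B f) = piA (mat2_mul B A) f.
Proof. exact (lincomp_mul B A f). Qed.

Lemma piA_id f : piA mat2_id f = f.
Proof. exact (lincomp_id f). Qed.

Lemma supnorm_piA A f : inGL2Z A -> supnorm (piA A f) = supnorm f.
Proof.
  intros HG. unfold supnorm.
  replace (fun x => exists s t, x = Defs.Cmod (piA A f s t))
    with (fun x => exists s t, x = Defs.Cmod (f s t)); [reflexivity|].
  apply functional_extensionality; intro x. apply propositional_extensionality. split.
  - intros (s & t & Hx).
    rewrite <- (piA_id f), <- (mat2_mulmV A HG), <- piA_mul in Hx.
    eexists; eexists; exact Hx.
  - intros (s & t & Hx). eexists; eexists; exact Hx.
Qed.

Lemma isometric_aut_of_pos_eig al A : pos_eig al A -> restricts_to_isometric_aut al A.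
Proof.
  intros HA. pose proof HA as [HG _]. split; [|split].
  - intros f Hf. apply in_A_piA; auto.
  - intros g Hg. exists (piA (mat2_inv A) g). split.
    + apply in_A_piA; auto. apply pos_eig_inv, HA.
    + rewrite piA_mul, mat2_mulVm, piA_id by exact HG. reflexivity.
  - intros f _. apply supnorm_piA, HG.
Qed.

Lemma exists_Z_mul_lt (w y : R) : w <> 0 -> exists n : Z, IZR n * w < y.
Proof.
  intros Hw. destruct (archimed (Rabs y / Rabs w)) as [Hup _].
  set (N := up (Rabs y / Rabs w)) in *.
  assert (Haw : 0 < Rabs w) by (apply Rabs_pos_lt, Hw).
  assert (Hy : Rabs y < IZR N * Rabs w).
  { apply (Rmult_lt_compat_r (Rabs w)) in Hup; [|exact Haw].
    unfold Rdiv in Hup. rewrite Rmult_assoc, Rinv_l in Hup; lra. }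
  pose proof (Rle_abs (- y)). rewrite Rabs_Ropp in *.
  destruct (Rle_or_lt 0 w) as [h|h].
  - exists (- N)%Z. rewrite opp_IZR. rewrite (Rabs_right w) in Hy by lra. lra.
  - exists N. rewrite (Rabs_left w) in Hy by lra. lra.
Qed.

Lemma halfplane_dual al u v :
  (forall m n : Z, 0 < IZR m + al * IZR n -> 0 <= IZR m * u + IZR n * v) -> v = u * al /\ 0 <= u.
Proof.
  intros H. assert (Hu : 0 <= u) by (specialize (H 1%Z 0%Z); simpl in H; lra).
  split; [|exact Hu]. apply NNPP. intro Hw.
  destruct (exists_Z_mul_lt (v - u * al) (- u) ltac:(lra)) as [n Hn].
  set (m := (Int_part (- al * IZR n) + 1)%Z).
  assert (Hm : 0 < IZR m + al * IZR n <= 1).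
  { pose proof (base_Int_part (- al * IZR n)). unfold m. rewrite plus_IZR. simpl. lra. }
  specialize (H m n (proj1 Hm)).
  replace (IZR m * u + IZR n * v) with (u * (IZR m + al * IZR n) + IZR n * (v - u * al)) in H by ring.
  nra.
Qed.

Lemma pos_eig_of_isometric_aut al A : inGL2Z A -> restricts_to_isometric_aut al A -> pos_eig al A.
Proof.
  intros HG [Hinto _].
  set (v := IZR (mc A) + IZR (md A) * al).
  assert (H : forall m n : Z, 0 < IZR m + al * IZR n -> 0 <= IZR m * eigval al A + IZR n * v).
  { intros m n Hmn. apply Rnot_lt_le. intro Hneg.
    destruct (Hinto _ (in_A_character al m n (Rlt_le _ _ Hmn))) as [_ Hz].
    rewrite piA_character in Hz.
    specialize (Hz (m * ma A + n * mc A)%Z (m * mb A + n * md A)%Z).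
    rewrite fourier_character_same in Hz.
    assert (E : (1, 0) = (0, 0)) by (apply Hz; unfold v, eigval in Hneg; push_IZR; lra).
    injection E. lra. }
  destruct (halfplane_dual al _ _ H) as [E P].
  assert (HE : eigvec al A) by exact E.
  repeat split; auto. destruct (Rle_lt_or_eq_dec _ _ P) as [h|h]; auto.
  exfalso. apply (eigval_neq0 al A HG HE). auto.
Qed.

Theorem mainTheorem12 (alpha : R) (Hpos : 0 < alpha)
  (Hquad : quadratic_irrational alpha) :
  exists A0 : mat2,
    inGL2Z A0 /\ A0 <> mat2_id /\
    restricts_to_isometric_aut alpha A0 /\
    forall A : mat2, inGL2Z A -> restricts_to_isometric_aut alpha A ->
      exists n : Z, A = mat2_powZ A0 n.
Proof.
  destruct (pos_eig_cyclic alpha (proj1 Hquad) (pos_eig_nontrivial alpha Hquad))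
    as (A0 & H0 & H1 & Hcyclic).
  exists A0. split; [apply H0|]. split.
  - intros ->. rewrite eigval_id in H1. lra.
  - split; [apply isometric_aut_of_pos_eig, H0|].
    intros A HG HA. apply Hcyclic, pos_eig_of_isometric_aut; assumption.
Qed.
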